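(* Let $G$ be a finite undirected graph, let $\tau\ge 1$ and $k$ be integers, and let $G'$ be the $(k,\tau)$-truss of $G$. Then for every connected component $G''$ of $G'$, the diameter satisfies $\omega(G'')\le \frac{2\tau(|V(G'')|-1)}{k}$.
   Context: Graphs are finite, simple, undirected and unweighted. A path may repeat vertices; its length is its number of edges. The diameter $\omega(H)$ of a connected graph $H$ is the maximum, over pairs of vertices, of the length of a shortest path between them in $H$. For vertices $v,u$ of a graph $H$, $u$ is $\tau$-hop reachable from $v$ in $H$ if $H$ contains a path between $u$ and $v$ of length at most $\tau$. $N_\tau(v,H)$ is the set of vertices $u\neq v$ that are $\tau$-hop reachable from $v$ in $H$. For an edge $e=(u,v)$ of $H$, $\Delta_\tau(e,H)=N_\tau(u,H)\cap N_\tau(v,H)$ and $\mathrm{sup}_\tau(e,H)=|\Delta_\tau(e,H)|$. The $(k,\tau)$-truss of $G$ is the maximal subgraph $G'$ of $G$ such that $\mathrm{sup}_\tau(e,G')\ge k-2$ for every edge $e\in E(G')$ (supports computed inside $G'$) and no more edges of $G$ can be added while keeping this property; a subgraph is determined by its edge set, its vertex set being the set of endpoints of its edges. *)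

From mathcomp Require Import all_boot all_order all_algebra.
Set Implicit Arguments. Unset Strict Implicit. Unset Printing Implicit Defensive.

Section Graphs.
Variable T : finType.

(* A simple graph on T is given by a symmetric irreflexive relation e.  A subgraph is given by
   its edge set F : {set {set T}}; its vertices are the endpoints. *)
Definition edges_of (e : rel T) : {set {set T}} :=
  [set [set p.1; p.2] | p in [set p : T * T | e p.1 p.2]].

Definition adj (F : {set {set T}}) : rel T :=
  fun x y => (x != y) && ([set x; y] \in F).

Definition verts (F : {set {set T}}) : {set T} :=
  [set x | [exists y, adj F x y]].

Definition reachb (F : {set {set T}}) (n : nat) (v u : T) : bool :=
  [exists m : 'I_n.+1, exists p : m.-tuple T, path (adj F) v p && (last v p == u)].

Definition Nb (F : {set {set T}}) (tau : nat) (v : T) : {set T} :=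
  [set u | (u != v) && reachb F tau v u].

Definition supp (F : {set {set T}}) (tau : nat) (u v : T) : nat :=
  #|Nb F tau u :&: Nb F tau v|.

Definition truss_prop (e : rel T) (k tau : nat) (F : {set {set T}}) : bool :=
  (F \subset edges_of e) &&
  [forall u, forall v, adj F u v ==> (k - 2 <= supp F tau u v)].

Definition is_truss (e : rel T) (k tau : nat) (F : {set {set T}}) : Prop :=
  maxset (truss_prop e k tau) F.

Definition is_component (F : {set {set T}}) (C : {set T}) : Prop :=
  exists2 x, x \in verts F & C = [set y | connect (adj F) x y].

Definition comp_edges (F : {set {set T}}) (C : {set T}) : {set {set T}} :=
  [set f in F | f \subset C].

(* shortest-path distance in F: least n with a walk of length <= n
   (any shortest path has length < #|T|, so searching below #|T| suffices
   for connected pairs) *)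
Definition dist (F : {set {set T}}) (u v : T) : nat :=
  find (fun n => reachb F n u v) (iota 0 #|T|).

Definition diam (F : {set {set T}}) (C : {set T}) : nat :=
  \max_(u in C) \max_(v in C) dist F u v.

End Graphs.

(* Fix a vertex u of the component C and let W be the distance from u in C.
   For an edge xy with W x = i and W y = i + 1, the endpoints x, y and their
   at least k - 2 common tau-neighbours all have W in (i - tau, i + tau].
   Hence, for any vertex v at distance D from u, every block of 2 tau
   consecutive distance levels below D contains at least max(k, 2) vertices,
   and summing over ceil(D / 2 tau) blocks gives k D <= 2 tau (|C| - 1). *)

From mathcomp Require Import all_boot all_order all_algebra.
From mathcomp Require Import zify.
Import GRing.Theory Num.Theory.
Set Implicit Arguments. Unset Strict Implicit.

Lemma ceil_mul_exists m n : 0 < m -> exists j, n <= m * j < n + m.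
Proof.
move=> m_gt0; exists ((n + m.-1) %/ m).
have := ltn_ceil (n + m.-1) m_gt0; have := leq_divM (n + m.-1) m.
rewrite [m * _]mulnC; lia.
Qed.

Section Walks.
Variables (T : finType) (F : {set {set T}}).

Lemma reachbP n v u :
  reflect (exists p : seq T, [/\ size p <= n, path (adj F) v p & last v p = u])
          (reachb F n v u).
Proof.
apply: (iffP existsP) => [[m /existsP [p /andP [pP /eqP <-]]] | [p [sz pP <-]]].
  by exists p; rewrite size_tuple -ltnS ltn_ord.
have sz' : size p < n.+1 by rewrite ltnS.
by exists (Ordinal sz'); apply/existsP; exists (in_tuple p); rewrite pP eqxx.
Qed.

Lemma adj_sym : symmetric (adj F).
Proof. by move=> x y; rewrite /adj eq_sym setUC. Qed.

Lemma reachb_cat a b x y z :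
  reachb F a x y -> reachb F b y z -> reachb F (a + b) x z.
Proof.
move=> /reachbP [p [sp pP lp]] /reachbP [q [sq qP lq]].
apply/reachbP; exists (p ++ q).
by rewrite size_cat leq_add // cat_path pP lp qP last_cat lp.
Qed.

Lemma reachb_sym n x y : reachb F n x y -> reachb F n y x.
Proof.
move=> /reachbP [p [sp pP <-]]; apply/reachbP; exists (rev (belast x p)); split.
- by rewrite size_rev size_belast.
- by rewrite rev_path; apply: sub_path pP => a b; rewrite adj_sym.
- by rewrite -(last_cons x) -rev_rcons -lastI rev_cons last_rcons.
Qed.

Lemma reachbSr n u y : reachb F n.+1 u y ->
  exists x, reachb F n u x /\ (x = y \/ adj F x y).
Proof.
move=> /reachbP [p [sp pP lp]].
have [sp_le | sp_gt] := leqP (size p) n.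
  by exists y; split; [apply/reachbP; exists p | left].
move: sp sp_gt pP lp; case/lastP: p => [//|p z].
rewrite size_rcons rcons_path last_rcons ltnS => sp _ /andP [pP pz] <-.
by exists (last u p); split; [apply/reachbP; exists p | right].
Qed.

Lemma dist_le n u w : reachb F n u w -> dist F u w <= n.
Proof.
move=> uw; rewrite /dist leqNgt; apply/negP => lt_n.
have n_lt : n < #|T|.
  apply: leq_trans lt_n _.
  by have := find_size (fun m => reachb F m u w) (iota 0 #|T|); rewrite size_iota.
by have := before_find 0 lt_n; rewrite nth_iota // add0n uw.
Qed.

Lemma reachb_dist n u w : n < #|T| -> reachb F n u w -> reachb F (dist F u w) u w.
Proof.
move=> n_lt uw.
have has_n : has (fun m => reachb F m u w) (iota 0 #|T|).
  by apply/hasP; exists n; rewrite ?mem_iota.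
have := nth_find 0 has_n; rewrite nth_iota ?add0n //.
by move: has_n; rewrite has_find size_iota.
Qed.

End Walks.

Section Component.
Variables (T : finType) (F : {set {set T}}) (x0 : T).
Local Notation C := [set y | connect (adj F) x0 y].
Local Notation H := (comp_edges F C).

Lemma adj_comp_edges x y : x \in C -> adj F x y -> adj H x y.
Proof.
rewrite inE => x0x xy.
have x0y : connect (adj F) x0 y by apply: connect_trans x0x (connect1 xy).
move: xy; rewrite /adj inE => /andP [-> ->] /=.
apply/subsetP => z; rewrite !inE.
by case/orP => /eqP ->.
Qed.

Lemma comp_edges_adj x y : adj H x y -> adj F x y.
Proof. by rewrite /adj => /andP [-> xyH]; move: xyH; rewrite inE => /andP [->]. Qed.

Lemma comp_edges_adj_mem x y : adj H x y -> (x \in C) && (y \in C).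
Proof.
rewrite /adj => /andP [_]; rewrite [_ \in comp_edges _ _]inE => /andP [_ /subsetP sub].
by rewrite !sub // !inE eqxx ?orbT.
Qed.

Lemma reachb_comp_edges n x w :
  x \in C -> reachb F n x w -> reachb H n x w /\ w \in C.
Proof.
move=> xC /reachbP [p [sp pP <-]].
suff /andP [pH lpC] : path (adj H) x p && (last x p \in C).
  by split=> //; apply/reachbP; exists p.
elim: p x xC pP {sp} => [|y p IHp] x xC /=; first by rewrite xC.
move=> /andP [xy pP]; have xyH := adj_comp_edges xC xy.
by rewrite xyH IHp //; case/andP: (comp_edges_adj_mem xyH).
Qed.

Lemma reachb_dist_comp x y : x \in C -> y \in C -> reachb H (dist H x y) x y.
Proof.
move=> xC yC; have : connect (adj F) x y.
  move: xC yC; rewrite !inE => x0x; apply: connect_trans.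
  by rewrite (sym_connect_sym (@adj_sym _ F)) in x0x.
case/connectP=> p pP ->; case: (shortenP pP) => q qP q_uniq _ {p pP}.
apply: (@reachb_dist _ _ (size q)).
  by move/card_uniqP: q_uniq => /= card_q; have := max_card (mem (x :: q)); rewrite card_q.
have qF : reachb F (size q) x (last x q) by apply/reachbP; exists q.
by case: (reachb_comp_edges xC qF).
Qed.

Section DistanceLevels.
Variable u : T.
Hypothesis uC : u \in C.
Local Notation W := (dist H u).

Lemma dist_reachb_le n z w : z \in C -> reachb H n z w -> W w <= W z + n.
Proof. by move=> zC zw; apply/dist_le/(reachb_cat (reachb_dist_comp uC zC) zw). Qed.

Lemma dist_pred y i : y \in C -> W y = i.+1 -> exists2 x, W x = i & adj H x y.
Proof.
move=> yC Wy; have := reachb_dist_comp uC yC; rewrite Wy.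
case/reachbSr=> x [ux [xy | xy]].
  by have := dist_le ux; rewrite xy Wy ltnn.
have /andP [xC _] := comp_edges_adj_mem xy.
have xy1 : reachb H 1 x y by apply/reachbP; exists [:: y]; rewrite /= xy.
exists x => //; have := dist_le ux; have := dist_reachb_le xC xy1; lia.
Qed.

Lemma dist_level v t : v \in C -> t <= W v -> exists2 y, y \in C & W y = t.
Proof.
move=> vC /subnKC; move: (W v - t) => n; elim: n t => [|n IHn] t Wv.
  by exists v; rewrite // -Wv addn0.
have [|y yC Wy] := IHn t.+1; first by rewrite addSnnS.
have [x Wx xy] := dist_pred yC Wy.
by exists x; rewrite ?Wx //; case/andP: (comp_edges_adj_mem xy).
Qed.

Lemma dist_level_edge v i : v \in C -> i < W v ->
  exists x y, [/\ adj H x y, W x = i & W y = i.+1].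
Proof.
move=> vC i_lt; have [y yC Wy] := dist_level vC i_lt.
by have [x Wx xy] := dist_pred yC Wy; exists x, y.
Qed.

Section TrussGrowth.
Variables (tau k : nat).
Hypothesis tau_gt0 : 0 < tau.
Hypothesis support_ge : forall x y, adj F x y -> k - 2 <= supp F tau x y.

(* [ball t] is the ball of radius [t - tau] around [u], shifted to avoid
   truncated subtraction. *)
Definition ball t := [set w in C | W w + tau <= t].

Lemma in_ball w t : (w \in ball t) = (w \in C) && (W w + tau <= t).
Proof. exact: in_set. Qed.

Definition shell x y := [set x; y] :|: (Nb F tau x :&: Nb F tau y).

(* [k - 2] is truncated, but the endpoints alone already give 2. *)
Lemma card_shell x y : adj F x y -> maxn k 2 <= #|shell x y|.
Proof.
move=> /[dup] xy /andP [x_neq_y _]; have := support_ge xy.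
have disj : [set x; y] :&: (Nb F tau x :&: Nb F tau y) = set0.
  by apply/setP=> z; rewrite !inE; case: (z == x); case: (z == y); rewrite ?andbF.
by rewrite /shell cardsU disj cards0 subn0 cards2 x_neq_y /supp; lia.
Qed.

Lemma shell_sub x y i : adj H x y -> W x = i -> W y = i.+1 ->
  shell x y \subset ball (i + 2 * tau) :\: ball i.
Proof.
move=> xy Wx Wy; have /andP [xC yC] := comp_edges_adj_mem xy.
apply/subsetP=> z; rewrite in_setD !in_ball.
case/setUP=> [/set2P [] -> | /setIP [zNx zNy]]; [by rewrite xC Wx; lia | by rewrite yC Wy; lia |].
have [xz yz] : reachb F tau x z /\ reachb F tau y z.
  by move: zNx zNy; rewrite !in_set => /andP [_ ->] /andP [_ ->].
have [xzH zC] := reachb_comp_edges xC xz.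
have [yzH _] := reachb_comp_edges yC yz.
have := dist_reachb_le xC xzH; have := dist_reachb_le zC (reachb_sym yzH).
by rewrite zC Wx Wy; lia.
Qed.

Lemma ball_growth v i : v \in C -> i < W v ->
  #|ball i| + maxn k 2 <= #|ball (i + 2 * tau)|.
Proof.
move=> vC i_lt; have [x [y [xy Wx Wy]]] := dist_level_edge vC i_lt.
have ball_sub : ball i \subset ball (i + 2 * tau).
  by apply/subsetP=> z; rewrite !in_ball => /andP [-> ?]; lia.
rewrite -(cardsID (ball i) (ball (i + 2 * tau))) (setIidPr ball_sub) leq_add2l.
apply: leq_trans (card_shell (comp_edges_adj xy)) (subset_leq_card _).
exact: shell_sub.
Qed.

Lemma card_ball_blocks v j : v \in C -> 2 * tau * j < W v + 2 * tau ->
  maxn k 2 * j <= #|ball (2 * tau * j)|.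
Proof.
move=> vC; elim: j => [|j IHj] j_lt; first by rewrite muln0.
rewrite mulnS addnC [2 * tau * j.+1]mulnS [_ + 2 * tau * j]addnC.
apply: leq_trans (ball_growth vC _); last by move: j_lt; rewrite mulnS; lia.
by rewrite leq_add2r IHj //; lia.
Qed.

Lemma card_ball_le v t : v \in C -> #|ball t| + (t < W v + tau) <= #|C|.
Proof.
move=> vC; case: ltnP => t_lt; last first.
  by rewrite addn0 subset_leq_card //; apply/subsetP=> z; rewrite in_ball => /andP [].
rewrite [#|C|](cardsD1 v) vC addn1 add1n ltnS subset_leq_card //.
apply/subsetP=> z; rewrite in_ball in_setD1 => /andP [-> Wz]; rewrite andbT.
by apply: contraTneq Wz => ->; lia.
Qed.

Lemma dist_comp_bound v : v \in C -> k * W v <= 2 * tau * (#|C| - 1).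
Proof.
move=> vC; have [|j /andP [Wv_le Wv_gt]] := @ceil_mul_exists (2 * tau) (W v); first lia.
have := card_ball_blocks vC Wv_gt; have := card_ball_le (2 * tau * j) vC.
have k_le := leq_maxl k 2; have two_le := leq_maxr k 2.
(* Either [v] lies outside the ball, or [W v + tau <= 2 tau j]; both give a
   slack of [2 tau] since [maxn k 2 >= 2]. *)
case: ltnP => [_ | j_ge] card_le card_ge.
  apply: leq_trans (leq_mul k_le Wv_le) _; rewrite mulnCA leq_mul2l; lia.
apply: leq_trans (leq_mul k_le (leqnn _)) _; nia.
Qed.

End TrussGrowth.
End DistanceLevels.
End Component.

Local Open Scope ring_scope.

Theorem mainTheorem2 (T : finType) (e : rel T) (e_sym : symmetric e)
  (e_irr : irreflexive e) (tau k : nat) (tau_ge1 : (1 <= tau)%N)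
  (k_gt0 : (0 < k)%N) (F : {set {set T}}) (HF : is_truss e k tau F)
  (C : {set T}) (HC : is_component F C) :
  ((diam (comp_edges F C) C)%:R : rat)
    <= (2 * tau * (#|C| - 1))%N%:R / k%:R.
Proof.
have /andP [_ /'forall_forallP support_ge] := maxsetp HF.
case: HC => x0 _ ->.
rewrite ler_pdivlMr ?ltr0n // -natrM ler_nat -(leq_divRL _ _ k_gt0).
apply/bigmax_leqP => u uC; apply/bigmax_leqP => v vC.
rewrite leq_divRL // mulnC.
exact: (dist_comp_bound uC tau_ge1 (fun x y => implyP (support_ge x y)) vC).
Qed.
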